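(* For every integer $k\ge2$ and every integer $x\ge2$, $\mathrm{ex}(2x,2k)\le 6\,\mathrm{ex}(x,2k)$.
   Context: The girth of a graph is the length of its shortest cycle ($\infty$ if none). $\mathrm{ex}(n,2k)$ is the maximum number of edges of a simple graph on $n$ vertices with girth at least $2k$. *)

From Stdlib Require Import ClassicalEpsilon.
From mathcomp Require Import all_boot.
Set Implicit Arguments. Unset Strict Implicit. Unset Printing Implicit Defensive.

Definition is_simple_graph n (E : {set {set 'I_n}}) : bool :=
  [forall e in E, #|e| == 2].

Definition adj n (E : {set {set 'I_n}}) : rel 'I_n :=
  fun u v => [set u; v] \in E.

(* girth >= g: every cycle (sequence of >= 3 distinct vertices, consecutive
   ones, cyclically, adjacent) has length >= g.  (Acyclic graphs: girth = oo.) *)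
Definition girth_ge n (E : {set {set 'I_n}}) (g : nat) : Prop :=
  forall s : seq 'I_n, uniq s -> 3 <= size s -> cycle (adj E) s -> g <= size s.

Definition girth_geb n (E : {set {set 'I_n}}) (g : nat) : bool :=
  if excluded_middle_informative (girth_ge E g) then true else false.

Definition ex (n g : nat) : nat :=
  \max_(E : {set {set 'I_n}} | is_simple_graph E && girth_geb E g) #|E|.

From Stdlib Require Import ClassicalEpsilon.
From mathcomp Require Import all_boot zify.
Set Implicit Arguments. Unset Strict Implicit. Unset Printing Implicit Defensive.

(* Double counting over the x-element vertex sets S of a graph G on 2x vertices
   with girth at least 2k: the edges of G inside S form a graph on x vertices
   whose girth is still at least 2k, so there are at most ex(x,2k) of them,
   while each edge lies inside exactly C(2x-2, x-2) such sets S.  Hence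
   |E(G)| C(2x-2, x-2) <= C(2x, x) ex(x,2k), and
   C(2x, x) / C(2x-2, x-2) = 2(2x-1)/(x-1) <= 6.  Girth enters only through its
   heredity to induced subgraphs. *)

Lemma card_supsets_draws (T : finType) (e : {set T}) x : #|e| <= x ->
  #|[set S : {set T} | #|S| == x & e \subset S]| = 'C(#|T| - #|e|, x - #|e|).
Proof.
move=> le_e_x.
have cardC : #|T| - #|e| = #|~: e| by rewrite [#|~: e|]cardsCs setCK.
have setUDK (S : {set T}) : e \subset S -> e :|: S :\: e = S.
  by move=> eS; rewrite -{2}(setID S e) (setIidPr eS).
have setDUK (B : {set T}) : [disjoint B & e] -> (e :|: B) :\: e = B.
  by move=> Be; rewrite setDUl setDv set0U; apply/setDidPl.
rewrite cardC -cards_draws -[RHS](@card_in_imset _ _ (fun B => e :|: B)); last first.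
  move=> B1 B2; rewrite !inE -!disjoints_subset => /andP[B1e _] /andP[B2e _] eqB.
  by rewrite -(setDUK _ B1e) -(setDUK _ B2e) eqB.
congr #|pred_of_set _|; apply/setP=> S; rewrite inE.
apply/andP/imsetP => [[/eqP cardS eS] | [B]].
  exists (S :\: e); last by rewrite setUDK.
  by rewrite inE subsetDr cardsDS // cardS eqxx.
rewrite inE -disjoints_subset => /andP[Be /eqP cardB] ->; split; last exact: subsetUl.
by rewrite cardsU setIC (disjoint_setI0 Be) cards0 subn0 cardB subnKC.
Qed.

Lemma bin_double_le x : 2 <= x -> 'C(2 * x, x) <= 6 * 'C(2 * x - 2, x - 2).
Proof.
case: x => [|[|y]] // _.
have -> : 2 * y.+2 - 2 = (2 * y + 3).-1 by lia.
have -> : y.+2 - 2 = y by lia.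
have h1 := mul_bin_diag (2 * y + 3) y.
have h2 := mul_bin_diag (2 * y.+2) y.+1.
rewrite (_ : (2 * y.+2).-1 = 2 * y + 3) in h2; last by lia.
rewrite -(leq_pmul2r (_ : 0 < y.+1 * y.+2)) //; nia.
Qed.

Lemma sum_card_subsets_exchange (T : finType) (E F : {set {set T}}) :
  \sum_(S in F) #|[set e in E | e \subset S]| =
  \sum_(e in E) #|[set S in F | e \subset S]|.
Proof.
under eq_bigr => S _ do rewrite -sum1_card.
rewrite (exchange_big_dep (mem E)) /= => [|S e _]; last by rewrite inE => /andP[].
by apply: eq_bigr => e eE; rewrite -sum1_card; apply: eq_bigl => S; rewrite !inE eE.
Qed.

Lemma girth_geP n (E : {set {set 'I_n}}) g : reflect (girth_ge E g) (girth_geb E g).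
Proof. by rewrite /girth_geb; case: excluded_middle_informative => h; constructor. Qed.

Section InducedSubgraph.

Variables (n : nat) (E : {set {set 'I_n}}) (S : {set 'I_n}).

Local Notation vS := (@enum_val _ (mem S)).

Definition induced_edges : {set {set 'I_#|S|}} :=
  [set e : {set 'I_#|S|} | vS @: e \in E].

Lemma imset_enum_val_preimset (e : {set 'I_n}) : e \subset S -> vS @: (vS @^-1: e) = e.
Proof.
move=> eS; apply/setP=> v; apply/imsetP/idP => [[i] | ve]; first by rewrite inE => ? ->.
have vinS := subsetP eS v ve.
by exists (enum_rank_in vinS v); rewrite ?inE enum_rankK_in.
Qed.

Lemma card_induced_edges : #|induced_edges| = #|[set e in E | e \subset S]|.
Proof.
rewrite -(card_imset _ (imset_inj (@enum_val_inj _ (mem S)))).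
congr #|pred_of_set _|; apply/setP=> e; rewrite inE.
apply/imsetP/andP => [[e'] | [eE eS]].
  rewrite inE => Ee' ->; split=> //.
  by apply/subsetP=> v /imsetP[i _ ->]; apply: enum_valP.
by exists (vS @^-1: e); rewrite ?inE imset_enum_val_preimset.
Qed.

Lemma induced_edges_simple : is_simple_graph E -> is_simple_graph induced_edges.
Proof.
move=> /forallP simpleE; apply/forallP=> e; apply/implyP; rewrite inE => Ee.
by have := simpleE (vS @: e); rewrite Ee card_imset //; apply: enum_val_inj.
Qed.

Lemma induced_edges_girth_ge g : girth_ge E g -> girth_ge induced_edges g.
Proof.
move=> girthE s uniq_s size_s cycle_s.
have inj := @enum_val_inj _ (mem S).
rewrite -(size_map vS); apply: girthE; rewrite ?map_inj_uniq ?size_map //.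
rewrite cycle_map; apply: sub_cycle cycle_s => u v.
by rewrite /adj /= inE imsetU1 imset_set1.
Qed.

End InducedSubgraph.

Lemma card_edges_within_le_ex n g (E : {set {set 'I_n}}) (S : {set 'I_n}) :
  is_simple_graph E -> girth_ge E g ->
  #|[set e in E | e \subset S]| <= ex #|S| g.
Proof.
move=> simpleE girthE; rewrite -card_induced_edges.
apply: (@leq_bigmax_cond _ _ (fun F : {set {set 'I_#|S|}} => #|F|)).
rewrite induced_edges_simple //=; apply/girth_geP.
exact: induced_edges_girth_ge.
Qed.

Theorem lemma5p2 (k x : nat) :
  2 <= k -> 2 <= x -> ex (2 * x) (2 * k) <= 6 * ex x (2 * k).
Proof.
move=> _ le2x; apply/bigmax_leqP => E /andP[simpleE /girth_geP girthE].
have c_gt0 : 0 < 'C(2 * x - 2, x - 2) by rewrite bin_gt0; lia.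
pose draws := [set S : {set 'I_(2 * x)} | #|S| == x].
have supsets_in_draws e :
    e \in E -> #|[set S in draws | e \subset S]| = 'C(2 * x - 2, x - 2).
  move=> Ee; have := forallP simpleE e; rewrite Ee => /eqP card_e.
  have := @card_supsets_draws _ e x; rewrite card_ord card_e => /(_ le2x) <-.
  by apply: eq_card => S; rewrite !inE.
have double_count : #|E| * 'C(2 * x - 2, x - 2) <= 'C(2 * x, x) * ex x (2 * k).
  rewrite -sum_nat_const -(eq_bigr _ supsets_in_draws) -sum_card_subsets_exchange.
  rewrite -[X in 'C(X, x)](card_ord (2 * x)) -card_draws -sum_nat_const.
  apply: leq_sum => S; rewrite inE => /eqP cardS.
  by rewrite -[in ex x _]cardS card_edges_within_le_ex.
rewrite -(leq_pmul2r c_gt0) mulnAC; apply: leq_trans double_count _.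
by rewrite leq_mul2r bin_double_le ?orbT.
Qed.
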